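(* Let $\mathcal{D}=(X,\mathcal{G},\mathcal{B})$ be an $\mathrm{STD}_\lambda[k;g]$, so that $v=\lambda g^2$ and $k=\lambda g$, where $\lambda\ge1$, $g\ge2$ and $(\lambda,g)\notin\{(1,2),(1,3),(2,2)\}$, and let $\Gamma_\mathcal{D}$ be its incidence graph. Then there exists a split resolving set for $\Gamma_\mathcal{D}$ of size $2\cdot\left\lceil\frac{v\log v}{k-\lambda}\right\rceil$.
   Context: A transversal design $\mathrm{TD}_\lambda[k;g]$ ($g\ge2$) is a triple $(X,\mathcal{G},\mathcal{B})$ where $X$ is a set of $kg$ points, $\mathcal{G}$ is a partition of $X$ into $k$ point classes of size $g$, and $\mathcal{B}$ is a family of $k$-subsets of $X$ (blocks) such that each block contains exactly one point of each point class and any two points from distinct point classes lie in exactly $\lambda$ blocks. It is symmetric (an $\mathrm{STD}_\lambda[k;g]$) if its dual (interchanging points and blocks) is also a $\mathrm{TD}_\lambda[k;g]$; then $k=\lambda g$ and $|X|=|\mathcal{B}|=\lambda g^2$. The incidence graph $\Gamma_\mathcal{D}$ is the bipartite graph on $X\cup\mathcal{B}$ with $x$ adjacent to $B$ iff $x\in B$. For a bipartite graph with bipartition $X\cup Y$, a split resolving set is a set $S=S_X\cup S_Y$ with $S_X\subseteq X$, $S_Y\subseteq Y$, such that any two distinct vertices of $X$ are at different distances from some vertex of $S_Y$, and any two distinct vertices of $Y$ are at different distances from some vertex of $S_X$. $\log$ is the natural logarithm. *)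

From mathcomp Require Import all_boot all_order all_algebra.
Set Implicit Arguments. Unset Strict Implicit. Unset Printing Implicit Defensive.
Import Order.TTheory GRing.Theory Num.Theory.

(* ---------- Transversal designs ----------
   Points form a finite type P, blocks a finite type B (blocks are indexed,
   so a "family" of blocks may contain repeated sets), and incidence is
   given by inc : P -> B -> bool. *)
Definition blk (P B : finType) (inc : P -> B -> bool) (b : B) : {set P} :=
  [set x | inc x b].

Definition is_TD (P B : finType) (inc : P -> B -> bool) (lam k g : nat) : Prop :=
  2 <= g /\
  exists G : {set {set P}},
    [/\ partition G [set: P], #|G| = k,
        (forall C, C \in G -> #|C| = g),
        (forall b, #|blk inc b| = k) &
        (forall b C, C \in G -> #|C :&: blk inc b| = 1)] /\
    (forall x y, pblock G x != pblock G y ->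
           #|[set b | inc x b && inc y b]| = lam).


Definition dual_inc (P B : finType) (inc : P -> B -> bool) : B -> P -> bool :=
  fun b x => inc x b.

Definition is_STD (P B : finType) (inc : P -> B -> bool) (lam k g : nat) : Prop :=
  is_TD inc lam k g /\ is_TD (dual_inc inc) lam k g.

Definition inc_graph (P B : finType) (inc : P -> B -> bool) : rel (P + B) :=
  fun u w => match u, w with
             | inl x, inr b => inc x b
             | inr b, inl x => inc x b
             | _, _ => false
             end.

Fixpoint ball (T : finType) (e : rel T) (n : nat) (u : T) : {set T} :=
  match n with
  | 0 => [set u]
  | n'.+1 => ball e n' u :|: [set w | [exists z in ball e n' u, e z w]]
  end.

(* Graph distance: Some d for the least d with w in the d-ball of u,
   None (infinite distance) if w is not reachable from u. Distances in a
   finite graph are always < #|T|. *)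
Definition gdist (T : finType) (e : rel T) (u w : T) : option nat :=
  match [seq n <- iota 0 #|T| | w \in ball e n u] with
  | n :: _ => Some n
  | [::] => None
  end.

Definition split_resolving (P B : finType) (e : rel (P + B))
    (SX : {set P}) (SY : {set B}) : Prop :=
  (forall x x' : P, x != x' ->
     exists2 s, s \in SY & gdist e (inr s) (inl x) != gdist e (inr s) (inl x')) /\
  (forall b b' : B, b != b' ->
     exists2 s, s \in SX & gdist e (inl s) (inr b) != gdist e (inl s) (inr b')).

From Pilot Require Import Defs.
From mathcomp Require Import all_boot all_order all_algebra.
From mathcomp Require Import all_classical all_reals all_analysis.
From mathcomp Require Import zify ring lra.
Set Implicit Arguments. Unset Strict Implicit. Unset Printing Implicit Defensive.
Import Order.TTheory GRing.Theory Num.Theory.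

(* A block s resolves two points as soon as it contains exactly one of them:
   that point is at distance 1 from s and the other one is not. Two distinct
   points of an STD_lam[k;g] share at most lam blocks, so at least 2(k - lam)
   blocks contain exactly one of them. Among the N-subsets of the v blocks, the
   proportion missing such a set of blocks is at most
   (1 - 2(k - lam)/v)^N <= exp(-2(k - lam)N/v) <= v^-2 when
   N = ceil(v ln v / (k - lam)), so a union bound over the fewer than v^2 pairs
   of points gives N blocks resolving all points; dually for blocks. The choice
   of N is admissible (N <= v) because ln v <= k - lam = lam(g - 1), and this is
   exactly where the three excluded parameter pairs fail. *)

Section GraphDistance.
Variables (T : finType) (e : rel T).

Lemma mem_ball1 u w : (w \in Defs.ball e 1 u) = (w == u) || e u w.
Proof.
rewrite /= !inE; congr (_ || _).
apply/existsP/idP => [[z /andP[/set1P -> //]] | euw].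
by exists u; rewrite inE eqxx.
Qed.

Lemma gdist_eq1 u w : u != w -> (gdist e u w == Some 1) = e u w.
Proof.
move=> uw; have T2 : 1 < #|T| by have := max_card [set u; w]; rewrite cards2 uw.
have wu : (w == u) = false by rewrite eq_sym (negbTE uw).
rewrite /gdist -(subnKC T2) -[iota 0 _]/(0 :: 1 :: iota 2 (#|T| - 2)) /=.
rewrite -[w \in u |: _]/(w \in Defs.ball e 1 u) mem_ball1 inE wu /=.
case: (e u w) => //.
case E: [seq n <- iota 2 _ | _] => [|n s] //=; apply/eqP => -[n1].
by have := mem_head n s; rewrite -E mem_filter mem_iota n1 => /and3P[].
Qed.

Lemma gdist_neq u w w' :
  u != w -> u != w' -> e u w != e u w' -> gdist e u w != gdist e u w'.
Proof.
move=> uw uw'; apply: contra => /eqP E.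
by rewrite -(gdist_eq1 uw) -(gdist_eq1 uw') E.
Qed.

End GraphDistance.

Lemma ffact_mul_expn_le a v N : a <= v -> a ^_ N * v ^ N <= v ^_ N * a ^ N.
Proof.
move=> av; elim: N => [|N IH]; first by rewrite !ffactn0.
have step : (a - N) * v <= (v - N) * a by nia.
rewrite !ffactnSr !expnS; move: (leq_mul IH step).
by rewrite mulnACA [X in _ <= X -> _]mulnACA [v * _]mulnC [a * _]mulnC.
Qed.

Lemma bin_mul_expn_le a v N : a <= v -> 'C(a, N) * v ^ N <= 'C(v, N) * a ^ N.
Proof.
move=> /(@ffact_mul_expn_le _ _ N).
by rewrite -!bin_ffact mulnAC [X in _ <= X]mulnAC leq_pmul2r ?fact_gt0.
Qed.

Lemma leq_card_bigcup (T I : finType) (P : {pred I}) (F : I -> {set T}) :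
  #|\bigcup_(i in P) F i| <= \sum_(i in P) #|F i|.
Proof.
elim/big_rec2: _ => [|i S n _ IH]; first by rewrite cards0.
by apply: leq_trans (leq_card_setU _ _) _; rewrite leq_add2l.
Qed.

Lemma exists_hitting_draw (T I : finType) (A : {set I}) (D : I -> {set T}) N d :
  (forall i, i \in A -> d <= #|D i|) ->
  #|A| * 'C(#|T| - d, N) < 'C(#|T|, N) ->
  exists2 S : {set T}, #|S| = N & forall i, i \in A -> exists2 u, u \in S & u \in D i.
Proof.
move=> hD hlt.
pose draws := [set S : {set T} | #|S| == N].
pose missing i := [set S : {set T} | S \subset ~: D i & #|S| == N].
have card_missing i : i \in A -> #|missing i| <= 'C(#|T| - d, N).
  by move=> iA; rewrite cards_draws leq_bin2l // cardsCs finset.setCK leq_sub2l ?hD.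
have /subsetPn[S] : ~~ (draws \subset \bigcup_(i in A) missing i).
  apply: contraL hlt => /subset_leq_card; rewrite card_draws -leqNgt => hle.
  apply: leq_trans hle (leq_trans (leq_card_bigcup _ _) _).
  by rewrite -sum_nat_const leq_sum.
rewrite inE => /eqP cardS notmissing; exists S => // i iA.
have : S \notin missing i by apply: contra notmissing => Si; apply/bigcupP; exists i.
rewrite inE cardS eqxx andbT => /subsetPn[u uS]; rewrite inE negbK.
by exists u.
Qed.

Lemma ltn_mul_bin_subn v d N m : N <= v -> m < v ^ 2 ->
  v ^ 2 * (v - d) ^ N <= v ^ N -> m * 'C(v - d, N) < 'C(v, N).
Proof.
move=> Nv mv hnum.
have vN : 0 < v ^ N by rewrite expn_gt0 (_ : 0 < v) //; nia.
have h2 : v ^ 2 * 'C(v - d, N) <= 'C(v, N).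
  rewrite -(leq_pmul2r vN) -mulnA; apply: leq_trans (leq_mul (leqnn _) (bin_mul_expn_le N (leq_subr d v))) _.
  by rewrite mulnCA leq_mul.
have [->|Cpos] := posnP 'C(v - d, N); first by rewrite muln0 bin_gt0.
by apply: leq_trans h2; rewrite ltn_pmul2r.
Qed.

Lemma card_symdiff (T : finType) (X Y : {set T}) :
  #|(X :\: Y) :|: (Y :\: X)| = #|X| + #|Y| - (#|X :&: Y|).*2.
Proof.
have disj : (X :\: Y) :&: (Y :\: X) = finset.set0.
  by apply/setP => u; rewrite !inE; case: (u \in X); case: (u \in Y).
rewrite cardsU disj cards0 subn0 !cardsD [Y :&: X]finset.setIC.
have := subset_leq_card (subsetIl X Y); have := subset_leq_card (subsetIr X Y).
rewrite -!addnn; lia.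
Qed.

Lemma exists_separating_draw (T U : finType) (f : T -> U -> bool) k lam N :
  (forall t, #|[set u | f t u]| = k) ->
  (forall t t', t != t' -> #|[set u | f t u && f t' u]| <= lam) ->
  0 < #|T| <= #|U| -> N <= #|U| ->
  #|U| ^ 2 * (#|U| - 2 * (k - lam)) ^ N <= #|U| ^ N ->
  exists2 S : {set U}, #|S| = N &
    forall t t', t != t' -> exists2 u, u \in S & f t u != f t' u.
Proof.
move=> hk hlam /andP[T0 TU] NU hnum.
pose A := [set p : T * T | p.1 != p.2].
pose D (p : T * T) := [set u | f p.1 u != f p.2 u].
have cardD p : p \in A -> 2 * (k - lam) <= #|D p|.
  case: p => t t'; rewrite inE /= => tt'.
  have -> : D (t, t') = [set u | f t u] :\: [set u | f t' u] :|: ([set u | f t' u] :\: [set u | f t u]).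
    by apply/setP => u; rewrite !inE; case: (f t u); case: (f t' u).
  rewrite card_symdiff !hk.
  have -> : [set u | f t u] :&: [set u | f t' u] = [set u | f t u && f t' u].
    by apply/setP => u; rewrite !inE.
  by have := hlam _ _ tt'; rewrite -!addnn; lia.
have cardA : #|A| < #|U| ^ 2.
  case/card_gt0P: T0 => t0 _.
  apply: leq_trans (_ : #|T| ^ 2 <= _); last by rewrite leq_exp2r.
  rewrite -mulnn -card_prod -cardsT; apply: proper_card; rewrite properT.
  by apply/negP => /eqP eA; have := finset.in_setT (t0, t0); rewrite -eA inE eqxx.
have [S cardS hit] := exists_hitting_draw cardD (ltn_mul_bin_subn NU cardA hnum).
exists S => // t t' tt'.
by have [|u uS] := hit (t, t'); [rewrite inE | rewrite inE => ?; exists u].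
Qed.

Section TransversalDesign.
Variables (P B : finType) (inc : P -> B -> bool) (lam k g : nat).
Hypothesis TD : is_TD inc lam k g.

Lemma TD_card_blk b : #|blk inc b| = k.
Proof. by case: TD => _ [G [[]]]. Qed.

Lemma TD_card : #|P| = k * g.
Proof.
case: TD => _ [G [[partG <- cardG _ _] _]].
by rewrite -cardsT (card_partition partG) (eq_bigr (fun _ => g)) ?sum_nat_const.
Qed.

Lemma TD_card_common x x' : x != x' -> #|[set b | inc x b && inc x' b]| <= lam.
Proof.
case: TD => _ [G [[partG _ _ _ meet1] common]] xx'.
have [same | diff] := eqVneq (finset.pblock G x) (finset.pblock G x'); last by rewrite common.
suff -> : [set b | inc x b && inc x' b] = finset.set0 by rewrite cards0.
apply/setP => b; rewrite !inE; apply/negP => /andP[xb x'b].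
have [covG _ _] := and3P partG.
have mem_cover y : y \in finset.cover G by rewrite (eqP covG) finset.in_setT.
have /eqP/cards1P[y Cb] := meet1 b _ (finset.pblock_mem (mem_cover x)).
have : x \in finset.pblock G x :&: blk inc b by rewrite !inE finset.mem_pblock mem_cover xb.
have : x' \in finset.pblock G x :&: blk inc b by rewrite !inE same finset.mem_pblock mem_cover x'b.
by rewrite Cb !inE => /eqP x'y /eqP xy; move: xx'; rewrite xy x'y eqxx.
Qed.

End TransversalDesign.

Section PowerBound.

(* Together with 16 <= e^3 this gives lam g^2 <= e^(lam (g - 1)). *)
Local Notation cube_le_pow16 l g := ((l * g ^ 2) ^ 3 <= 16 ^ (l * (g - 1))).

Lemma cube_le_pow16_succl l g : 0 < l -> 1 < g ->
  cube_le_pow16 l g -> cube_le_pow16 l.+1 g.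
Proof.
move=> l0 g1; rewrite (expnMn l.+1) (expnMn l) (mulSn l (g - 1)) expnD.
have h16 : 16 <= 16 ^ (g - 1) by rewrite -{1}(expn1 16) leq_pexp2l // subn_gt0.
have hl : l.+1 ^ 3 <= 8 * l ^ 3 by nia.
move: (16 ^ (g - 1)) (16 ^ (l * (g - 1))) ((g ^ 2) ^ 3) (l.+1 ^ 3) (l ^ 3) h16 hl.
nia.
Qed.

Lemma cube_le_pow16_succr l g : 0 < l -> 1 < g ->
  cube_le_pow16 l g -> cube_le_pow16 l g.+1.
Proof.
move=> l0 g1; rewrite (expnMn l) (expnMn l) subSS subn0.
rewrite (_ : l * g = l + l * (g - 1)) ?expnD; last by rewrite -mulnS subn1 prednK // ltnW.
have h16 : 16 <= 16 ^ l by rewrite -{1}(expn1 16) leq_pexp2l.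
have hg : (g.+1 ^ 2) ^ 3 <= 16 * (g ^ 2) ^ 3.
  by rewrite -!expnM !(mulnC 2) !expnM -[16]/(4 ^ 2) -expnMn leq_exp2r //; nia.
move: (16 ^ l) (16 ^ (l * (g - 1))) ((g.+1 ^ 2) ^ 3) ((g ^ 2) ^ 3) (l ^ 3) h16 hg.
nia.
Qed.

Lemma cube_le_pow16_mono l0 g0 l g : 0 < l0 -> 1 < g0 -> l0 <= l -> g0 <= g ->
  cube_le_pow16 l0 g0 -> cube_le_pow16 l g.
Proof.
move=> l0p g0p /subnKC <- /subnKC <- h.
have hg n : cube_le_pow16 l0 (g0 + n).
  by elim: n => [|n IH]; rewrite ?addn0 // addnS cube_le_pow16_succr // ltn_addr.
elim: (l - l0) => [|n IH]; first by rewrite addn0; apply: hg.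
by rewrite addnS cube_le_pow16_succl ?ltn_addr ?ltn_addr.
Qed.

Lemma cube_le_pow16_admissible l g : 0 < l -> 1 < g ->
  ~ ((l == 1) && (g == 2)) -> ~ ((l == 1) && (g == 3)) -> ~ ((l == 2) && (g == 2)) ->
  cube_le_pow16 l g.
Proof.
move=> l0 g1 n12 n13 n22.
have [g4 | ] := leqP 4 g; first exact: (@cube_le_pow16_mono 1 4).
rewrite ltnS leq_eqVlt ltnS => /orP[/eqP g3 | g2].
  by apply: (@cube_le_pow16_mono 2 3) => //; move: n13; rewrite g3; lia.
have -> : g = 2 by lia.
by apply: (@cube_le_pow16_mono 3 2) => //; move: n12 n22; lia.
Qed.
End PowerBound.

Local Open Scope ring_scope.

Lemma expR3_ge16 (R : realType) : 16 <= expR (3 : R).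
Proof.
have -> : expR (3 : R) = expR (6^-1) ^+ 18 by rewrite -expRM_natr; congr expR; lra.
apply: le_trans (_ : (7 / 6) ^+ 18 <= _); first lra.
by apply: lerXn2r; rewrite ?nnegrE ?expR_ge0 //; have := expR_ge1Dx (6^-1 : R); lra.
Qed.

Lemma ln_le_of_cube_le_pow16 (R : realType) (v m : nat) :
  (0 < v)%N -> (v ^ 3 <= 16 ^ m)%N -> ln (v%:R : R) <= m%:R.
Proof.
move=> v0 hv; rewrite -(@ler_pM2l _ 3) // -ler_expR mulrC expRM_natr lnK ?posrE ?ltr0n //.
rewrite (mulrC 3) expRM_natl; apply: le_trans (_ : 16 ^+ m <= _).
  by rewrite -natrX -[16 : R]/(16%:R) -natrX ler_nat.
by apply: lerXn2r; rewrite ?nnegrE ?expR_ge0 ?expR3_ge16.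
Qed.

Lemma sqr_mul_expn_subr_le (R : realType) (V D : R) (N : nat) :
  0 < V -> 0 <= D <= V -> 2 * V * ln V <= D * N%:R -> V ^+ 2 * (V - D) ^+ N <= V ^+ N.
Proof.
move=> V0 /andP[D0 DV] hN.
have -> : V - D = V * (1 - D / V) by rewrite mulrBr mulr1 mulrCA divff ?mulr1 ?gt_eqF.
have hq : (1 - D / V) ^+ N <= V ^-2.
  apply: le_trans (_ : expR (- (D / V)) ^+ N <= _).
    apply: lerXn2r; rewrite ?nnegrE ?expR_ge0 -?expRM_natr //; last first.
      by have := expR_ge1Dx (- (D / V)); lra.
    by rewrite subr_ge0 ler_pdivrMr // mul1r.
  have -> : V ^-2 = expR (- (2 * ln V)) by rewrite expRN expRM_natl lnK // posrE.
  by rewrite -expRM_natr ler_expR mulNr lerN2 mulrAC ler_pdivlMr //; nra.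
rewrite exprMn mulrA; apply: le_trans (ler_wpM2l _ hq) _.
  by rewrite mulr_ge0 // exprn_ge0 // ltW.
by rewrite mulrAC divff ?mul1r // gt_eqF // exprn_gt0.
Qed.

Lemma exists_draw_size (R : realType) (v d : nat) :
  (0 < d)%N -> (2 * d <= v)%N -> ln (v%:R : R) <= d%:R ->
  exists2 N : nat, N%:Z = Num.ceil (v%:R * ln (v%:R : R) / d%:R) &
    (N <= v)%N /\ (v ^ 2 * (v - 2 * d) ^ N <= v ^ N)%N.
Proof.
move=> d0 dv lnv; set x := _ / _.
have v1 : 1 <= v%:R :> R by rewrite ler1n; lia.
have d0R : 0 < d%:R :> R by rewrite ltr0n.
have x0 : 0 <= x by rewrite divr_ge0 ?mulr_ge0 ?ln_ge0 // ltW // (lt_le_trans ltr01).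
exists `|Num.ceil x|%N; first by rewrite abszE ger0_norm // ceil_ge0 (lt_le_trans _ x0).
have xN : x <= `|Num.ceil x|%N%:R.
  by rewrite -[_%:R]/((`|Num.ceil x|%N)%:~R) abszE ger0_norm ?ceil_ge // ceil_ge0 (lt_le_trans _ x0).
split.
  rewrite -lez_nat abszE ger0_norm ?ceil_ge0 ?(lt_le_trans _ x0) // ceil_le_int.
  by rewrite /x ler_pdivrMr // ler_wpM2l // (le_trans ler01).
rewrite -(ler_nat R) natrM !natrX natrB // natrM.
apply: sqr_mul_expn_subr_le; first exact: lt_le_trans ltr01 v1.
  by rewrite mulr_ge0 ?ler0n //= -natrM ler_nat.
by move: xN; rewrite /x ler_pdivrMr //; nra.
Qed.

Theorem corollary3p4 (R : realType) (P B : finType) (inc : P -> B -> bool)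
    (lam g : nat) :
  (1 <= lam)%N -> (2 <= g)%N ->
  ~ ((lam == 1%N) && (g == 2%N)) -> ~ ((lam == 1%N) && (g == 3%N)) ->
  ~ ((lam == 2%N) && (g == 2%N)) ->
  is_STD inc lam (lam * g) g ->
  let v : R := (lam * g ^ 2)%:R in
  let k : R := (lam * g)%:R in
  exists SX : {set P}, exists SY : {set B},
    split_resolving (inc_graph inc) SX SY /\
    ((#|SX| + #|SY|)%:Z = 2 * Num.ceil (v * ln v / (k - lam%:R)))%R.
Proof.
move=> lam1 g2 n12 n13 n22 [TD TDd] v k.
set vn := (lam * g ^ 2)%N; set dn := (lam * (g - 1))%N.
have cardP : #|P| = vn by rewrite (TD_card TD) -mulnA mulnn.
have cardB : #|B| = vn by rewrite (TD_card TDd) -mulnA mulnn.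
have vn0 : (0 < vn)%N by rewrite muln_gt0 expn_gt0; lia.
have k_sub : (lam * g - lam)%N = dn by rewrite /dn mulnBr muln1.
have -> : k - lam%:R = dn%:R by rewrite -k_sub natrB // leq_pmulr // ltnW.
have ln_v : ln v <= dn%:R by exact/ln_le_of_cube_le_pow16/cube_le_pow16_admissible.
have dn0 : (0 < dn)%N by rewrite muln_gt0; lia.
have dnv : (2 * dn <= vn)%N by rewrite mulnCA leq_mul2l; nia.
have [N eN [Nv hnum]] := exists_draw_size dn0 dnv ln_v.
have [SY cardSY sepY] : exists2 S : {set B}, #|S| = N &
    forall x x', x != x' -> exists2 s, s \in S & inc x s != inc x' s.
  apply: exists_separating_draw (TD_card_blk TDd) (TD_card_common TD) _ _ _;
    by rewrite ?cardP ?cardB ?k_sub ?leqnn ?vn0.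
have [SX cardSX sepX] : exists2 S : {set P}, #|S| = N &
    forall b b', b != b' -> exists2 s, s \in S & inc s b != inc s b'.
  apply: exists_separating_draw (TD_card_blk TD) (TD_card_common TDd) _ _ _;
    by rewrite ?cardP ?cardB ?k_sub ?leqnn ?vn0.
exists SX, SY; split; last by rewrite cardSX cardSY -eN; lia.
split=> [x x' /sepY[s sS sep] | b b' /sepX[s sS sep]]; exists s => //; exact: gdist_neq.
Qed.
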